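(* Let $g_0\neq 0$ and let $s_0\in\mathbb{Z}_{\ge0}^{G^+}$ be given by $s_0(g_0)=1$ and $s_0(g)=0$ for $g\in G^+$, $g\neq g_0$. Then $s_0$ is a vertex of $P(G,g_0)$ and it is adjacent to every other vertex of $P(G,g_0)$.
   Context: Let $G$ be a finite abelian group of order $D$ with zero element $0$, and let $G^+=G\setminus\{0\}$. For $g_0\in G$, let $T(G,g_0)$ be the set of vectors $t=(t(g))_{g\in G^+}\in\mathbb{Z}_{\ge 0}^{G^+}$ with $\sum_{g\in G^+}t(g)g=g_0$ (sum computed in $G$). The master corner polyhedron is $P(G,g_0)=\mathrm{conv}\,T(G,g_0)\subset\mathbb{R}^{G^+}$. Two vertices are adjacent if the segment joining them is an edge (one-dimensional face) of $P(G,g_0)$. *)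

From HB Require Import structures.
From mathcomp Require Import all_boot all_order all_algebra.
Set Implicit Arguments. Unset Strict Implicit. Unset Printing Implicit Defensive.
Import Order.TTheory GRing.Theory Num.Theory.
Local Open Scope ring_scope.

Definition Gplus (G : finZmodType) : finType := {g : G | g != 0}.

Definition inT (G : finZmodType) (g0 : G) (t : Gplus G -> nat) : Prop :=
  \sum_(g : Gplus G) (val g) *+ t g = g0.

Definition embed (R : realFieldType) (G : finZmodType) (t : Gplus G -> nat)
  : Gplus G -> R := fun g => (t g)%:R.

Definition inP (R : realFieldType) (G : finZmodType) (g0 : G)
  (x : Gplus G -> R) : Prop :=
  exists (n : nat) (lam : 'I_n -> R) (t : 'I_n -> (Gplus G -> nat)),
    [/\ forall i, 0 <= lam i,
        \sum_(i < n) lam i = 1,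
        forall i, inT g0 (t i) &
        forall g, x g = \sum_(i < n) lam i * (t i g)%:R].

Definition dotp (R : realFieldType) (G : finZmodType)
  (c x : Gplus G -> R) : R := \sum_(g : Gplus G) c g * x g.

Definition is_face (R : realFieldType) (G : finZmodType)
  (P : (Gplus G -> R) -> Prop) (F : (Gplus G -> R) -> Prop) : Prop :=
  exists (c : Gplus G -> R) (d : R),
    (forall x, P x -> dotp c x <= d) /\
    (forall x, F x <-> (P x /\ dotp c x = d)).

Definition is_vertex (R : realFieldType) (G : finZmodType)
  (P : (Gplus G -> R) -> Prop) (v : Gplus G -> R) : Prop :=
  is_face P (fun x => x = v).

Definition segment (R : realFieldType) (G : finZmodType)
  (u v : Gplus G -> R) (x : Gplus G -> R) : Prop :=
  exists l : R, [/\ 0 <= l, l <= 1 & forall g, x g = (1 - l) * u g + l * v g].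

Definition adjacent (R : realFieldType) (G : finZmodType)
  (P : (Gplus G -> R) -> Prop) (u v : Gplus G -> R) : Prop :=
  [/\ is_vertex P u, is_vertex P v, u <> v & is_face P (segment u v)].

Definition s0 (G : finZmodType) (g0 : G) : Gplus G -> nat :=
  fun g => if val g == g0 then 1%N else 0%N.

From HB Require Import structures.
From mathcomp Require Import all_boot all_order all_algebra all_fingroup.
From mathcomp Require Import cyclic ring lra.
From Stdlib Require Import FunctionalExtensionality.
Set Implicit Arguments. Unset Strict Implicit. Unset Printing Implicit Defensive.
Import Order.TTheory GRing.Theory Num.Theory FinRing.Theory.
Local Open Scope ring_scope.

(* P(G,g0) is the convex hull of the embedded points of
   T(G,g0), so an inequality c.x <= d is valid on P as soon as it is valid on
   T, and a point of P on the hyperplane c.x = d is a convex combination of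
   points of T on that hyperplane.  Hence a segment [pt a, pt b] with a, b in T
   is a face as soon as some inequality valid on T is tight exactly at pt a and
   pt b (lemma [segment_face]).
   Write e for the point g0 of G^+ and s0 for the unit vector at e.
   - s0 is a vertex: the functional -x(e) - 2 sum_{g<>e} x(g) is at most -1 on
     T, with equality only at s0 ([s0_vertex]).
   - Let v <> s0 be a vertex, exposed by (c,d).  Then v = pt t with t in T;
     c < 0 everywhere (adding |G| copies of g to t stays in T); d < 0; and
     t(e) = 0 (otherwise 2t - s0 and s0 would both be tight).  Replacing c(e)
     by d gives a functional that is valid on T and tight exactly at s0 and t
     ([lift_functional]), so [s0, v] is a face ([adjacent_face]). *)

(* Lagrange's theorem in the additive group: |G| x = 0. *)
Lemma mulrn_card (G : finZmodType) (x : G) : x *+ #|G| = 0.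
Proof. by rewrite -zmodXgE -cardsT expg_cardG ?inE. Qed.

Lemma inT_nonzero (G : finZmodType) (g0 : G) (t : Gplus G -> nat) :
  g0 != 0 -> inT g0 t -> exists g, (0 < t g)%N.
Proof.
move=> g0_neq0 Tt; apply/existsP; apply: contraR g0_neq0 => /existsPn t0.
rewrite -Tt /inT big1 // => g _.
by move: (t0 g); rewrite lt0n negbK => /eqP ->.
Qed.

Lemma segment_same (R : realFieldType) (G : finZmodType) (u x : Gplus G -> R) :
  segment u u x <-> x = u.
Proof.
split => [[l [_ _ xE]]|->].
  by apply: functional_extensionality => g; rewrite xE -mulrDl subrK mul1r.
by exists 0; split=> [||g]; rewrite ?lexx ?ler01 // subr0 mul1r mul0r addr0.
Qed.

Section ConvexHull.

Variables (R : realFieldType) (G : finZmodType) (g0 : G).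

Local Notation pt t := (embed R t).
Local Notation vec := (Gplus G -> R).

Definition valid_on_T (c : vec) (d : R) : Prop :=
  forall t, inT g0 t -> dotp c (pt t) <= d.

Lemma dotp_comb n (lam : 'I_n -> R) (t : 'I_n -> Gplus G -> nat) (x c : vec) :
  (forall g, x g = \sum_i lam i * (t i g)%:R) ->
  dotp c x = \sum_i lam i * dotp c (pt (t i)).
Proof.
move=> xE; rewrite /dotp.
under eq_bigr do rewrite xE big_distrr.
rewrite exchange_big /=; apply: eq_bigr => i _.
by rewrite big_distrr; apply: eq_bigr => g _; rewrite /embed mulrCA.
Qed.

Lemma valid_on_P c d : valid_on_T c d -> forall x, inP g0 x -> dotp c x <= d.
Proof.
move=> cd x [n [lam [t [lam_ge0 lam_sum Tt xE]]]].
rewrite (dotp_comb c xE) -[leRHS]mul1r -lam_sum mulr_suml.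
by apply: ler_sum => i _; apply: ler_wpM2l; [exact: lam_ge0 | exact: cd].
Qed.

Lemma tight_support c d n (lam : 'I_n -> R) (t : 'I_n -> Gplus G -> nat) x :
  valid_on_T c d -> (forall i, 0 <= lam i) -> \sum_i lam i = 1 ->
  (forall i, inT g0 (t i)) -> (forall g, x g = \sum_i lam i * (t i g)%:R) ->
  dotp c x = d -> forall i, lam i != 0 -> dotp c (pt (t i)) = d.
Proof.
move=> cd lam_ge0 lam_sum Tt xE xd i lam_i.
have slack_ge0 j : true -> 0 <= lam j * (d - dotp c (pt (t j))).
  by move=> _; rewrite mulr_ge0 // subr_ge0 cd.
have slack0 : \sum_j lam j * (d - dotp c (pt (t j))) = 0.
  under eq_bigr do rewrite mulrBr.
  by rewrite sumrB -mulr_suml lam_sum mul1r -(dotp_comb c xE) xd subrr.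
move/eqP: (@psumr_eq0P _ _ _ _ slack_ge0 slack0 i isT).
by rewrite mulf_eq0 (negPf lam_i) subr_eq0 => /eqP.
Qed.

Lemma segment_of_support n (lam : 'I_n -> R) (t : 'I_n -> Gplus G -> nat) (x u w : vec) :
  (forall i, 0 <= lam i) -> \sum_i lam i = 1 ->
  (forall g, x g = \sum_i lam i * (t i g)%:R) ->
  (forall i, lam i != 0 -> pt (t i) = u \/ pt (t i) = w) ->
  segment u w x.
Proof.
move=> lam_ge0 lam_sum xE supp.
pose atw i := [forall g, (t i g)%:R == w g].
pose l := \sum_(i | atw i) lam i.
have restE : \sum_(i | ~~ atw i) lam i = 1 - l.
  by rewrite -lam_sum [in RHS](bigID atw) /= addrAC subrr add0r.
exists l; split.
- exact: sumr_ge0.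
- by rewrite -subr_ge0 -restE sumr_ge0.
move=> g; rewrite xE (bigID atw) /= addrC -restE /l !mulr_suml; congr (_ + _).
  apply: eq_bigr => i /negP not_w.
  have [->|lam_i] := eqVneq (lam i) 0; first by rewrite !mul0r.
  case: (supp i lam_i) => [<-|tw] //.
  by case: not_w; apply/forallP => h; rewrite -tw.
by apply: eq_bigr => i /forallP /(_ g) /eqP ->.
Qed.

Lemma inP_embed t : inT g0 t -> inP g0 (pt t).
Proof.
move=> Tt; exists 1%N, (fun _ => 1), (fun _ => t); split.
- by move=> _; exact: ler01.
- by rewrite big_ord1.
- by [].
- by move=> g; rewrite big_ord1 mul1r.
Qed.

Lemma inP_segment a b l (x : vec) :
  inT g0 a -> inT g0 b -> 0 <= l -> l <= 1 ->
  (forall g, x g = (1 - l) * pt a g + l * pt b g) ->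
  inP g0 x /\ (forall c, dotp c x = (1 - l) * dotp c (pt a) + l * dotp c (pt b)).
Proof.
move=> Ta Tb l_ge0 l_le1 xE.
pose lam (i : 'I_2) := if i == ord0 then 1 - l else l.
pose t (i : 'I_2) := if i == ord0 then a else b.
have xE' g : x g = \sum_i lam i * (t i g)%:R.
  by rewrite xE !big_ord_recl big_ord0 addr0.
split; last by move=> c; rewrite (dotp_comb c xE') !big_ord_recl big_ord0 addr0.
exists 2%N, lam, t; split => //.
- by move=> i; rewrite /lam; case: ifP; rewrite ?subr_ge0.
- by rewrite !big_ord_recl big_ord0 addr0 /lam /= subrK.
- by move=> i; rewrite /t; case: ifP.
Qed.

Lemma segment_face c d a b :
  inT g0 a -> inT g0 b -> valid_on_T c d ->
  dotp c (pt a) = d -> dotp c (pt b) = d ->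
  (forall t, inT g0 t -> dotp c (pt t) = d -> pt t = pt a \/ pt t = pt b) ->
  is_face (inP g0) (segment (pt a) (pt b)).
Proof.
move=> Ta Tb cd ad bd tightT; exists c, d; split; first exact: valid_on_P.
move=> x; split.
  move=> [l [l_ge0 l_le1 xE]].
  have [Px ->] := inP_segment Ta Tb l_ge0 l_le1 xE.
  by split => //; rewrite ad bd; ring.
move=> [[n [lam [t [lam_ge0 lam_sum Tt xE]]] xd]].
apply: (segment_of_support lam_ge0 lam_sum xE) => i lam_i.
exact/tightT/(tight_support cd lam_ge0 lam_sum Tt xE xd).
Qed.

Definition exposes (c : vec) (d : R) (t : Gplus G -> nat) : Prop :=
  [/\ inT g0 t, valid_on_T c d, dotp c (pt t) = d &
      forall t', inT g0 t' -> dotp c (pt t') = d -> pt t' = pt t].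

Lemma vertex_exposed v :
  is_vertex (inP g0) v -> exists c d t, exposes c d t /\ pt t = v.
Proof.
move=> [c [d [cdP faceE]]].
have [[n [lam [ts [lam_ge0 lam_sum Tts vE]]]] vd] := iffLR (faceE v) erefl.
have cd : valid_on_T c d by move=> t Tt; apply/cdP/inP_embed.
have only_v t : inT g0 t -> dotp c (pt t) = d -> pt t = v.
  by move=> Tt td; apply/faceE; split => //; apply: inP_embed.
have [i lam_i] : exists i, lam i != 0.
  case: (boolP [exists i, lam i != 0]) => [/existsP //|/existsPn lam0].
  move: lam_sum; rewrite big1 => [/eqP|i _]; first by rewrite eq_sym oner_eq0.
  exact/eqP/negbNE/lam0.
have tid := tight_support cd lam_ge0 lam_sum Tts vE vd lam_i.
have tiv := only_v _ (Tts i) tid.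
exists c, d, (ts i); split => //; split => // t Tt td.
by rewrite tiv; apply: only_v.
Qed.

Section Exposed.

Variables (c : vec) (d : R) (t : Gplus G -> nat).
Hypothesis exp_t : exposes c d t.

(* An exposing functional is negative in every coordinate: adding |G| copies
   of g to t stays in T and moves off the point pt t. *)
Lemma exposes_coef_neg g : c g < 0.
Proof.
have [Tt cd td only_t] := exp_t.
pose t' h := (t h + (if h == g then #|G| else 0))%N.
have Tt' : inT g0 t'.
  rewrite /inT /t'; under eq_bigr do rewrite mulrnDr.
  rewrite big_split /= Tt (bigD1 g) //= eqxx mulrn_card add0r big1 ?addr0 // => h hg.
  by rewrite (negPf hg).
have t'E : dotp c (pt t') = d + c g * #|G|%:R.
  rewrite -td /dotp /embed /t'; under eq_bigr do rewrite natrD mulrDr.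
  rewrite big_split /=; congr (_ + _).
  rewrite (bigD1 g) //= eqxx big1 ?addr0 // => h hg.
  by rewrite (negPf hg) mulr0.
have cardG : (0 < #|G|)%N by apply/card_gt0P; exists 0.
have t'_ne_d : dotp c (pt t') != d.
  apply/eqP => /(only_t _ Tt') /(congr1 (fun f => f g)).
  rewrite /embed /t' eqxx natrD => /eqP; rewrite -subr_eq0 addrAC subrr add0r.
  by rewrite pnatr_eq0 => /eqP card0; rewrite card0 in cardG.
have : c g * #|G|%:R < 0.
  rewrite lt_neqAle; apply/andP; split.
    by apply: contra t'_ne_d; rewrite t'E => /eqP ->; rewrite addr0.
  by have := cd _ Tt'; rewrite t'E; lra.
by rewrite pmulr_llt0 // ltr0n.
Qed.

(* If g0 <> 0 the exposed point t is non-zero, so the right-hand side is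
   negative. *)
Lemma exposes_rhs_neg : g0 != 0 -> d < 0.
Proof.
move=> g0_neq0; have [Tt _ <- _] := exp_t.
have [g tg] := inT_nonzero g0_neq0 Tt.
rewrite /dotp (bigD1 g) //=.
have term_g : c g * pt t g < 0 by rewrite nmulr_rlt0 ?exposes_coef_neg // /embed ltr0n.
suff : \sum_(h | h != g) c h * pt t h <= 0 by lra.
by apply: sumr_le0 => h _; rewrite mulr_le0_ge0 // ltW ?exposes_coef_neg.
Qed.

End Exposed.

Section UnitVector.

Variable e : Gplus G.
Hypothesis eE : val e = g0.

Fact g0_neq0 : g0 != 0.
Proof. by rewrite -eE (valP e). Qed.

Lemma s0E g : s0 g0 g = if g == e then 1%N else 0%N.
Proof. by rewrite /s0 -eE val_eqE. Qed.

Lemma s0_inT : inT g0 (s0 g0).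
Proof.
rewrite /inT (bigD1 e) //= s0E eqxx eE big1 ?addr0 // => g ge.
by rewrite s0E (negPf ge).
Qed.

Lemma dotp_s0 c : dotp c (pt (s0 g0)) = c e.
Proof.
rewrite /dotp (bigD1 e) //= /embed s0E eqxx mulr1 big1 ?addr0 // => g ge.
by rewrite s0E (negPf ge) mulr0.
Qed.

(* An exposed point other than s0 has no weight at e: otherwise 2t - s0 lies
   in T, and since c.(2t - s0) + c.s0 = 2d both would be tight, so s0 = t. *)
Lemma exposes_off_e c d t : exposes c d t -> pt t <> pt (s0 g0) -> t e = 0%N.
Proof.
move=> [Tt cd td only_t] t_ne_s0.
case te: (t e) => [|k] //; exfalso.
pose b h := ((t h).*2 - s0 g0 h)%N.
have bE h : (b h + s0 g0 h = (t h).*2)%N.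
  by rewrite /b subnK // s0E; case: eqP => [->|//]; rewrite te.
have Tb : inT g0 b.
  apply: (@addIr _ g0); rewrite -[X in _ + X = _]s0_inT /inT -big_split /=.
  under eq_bigr do rewrite -mulrnDr bE -mul2n mulnC mulrnA.
  by rewrite sumrMnl Tt mulr2n.
have sum2d : dotp c (pt b) + dotp c (pt (s0 g0)) = d + d.
  rewrite -td /dotp -!big_split /=; apply: eq_bigr => h _.
  by rewrite /embed -!mulrDr -natrD bE -addnn natrD.
have b_le := cd _ Tb; have s0_le := cd _ s0_inT.
have s0d : dotp c (pt (s0 g0)) = d by lra.
exact/t_ne_s0/esym/(only_t _ s0_inT).
Qed.

(* Indeed a point with x(e) = k+1 has
   c.x = (k+1) d + sum_{g<>e} c(g) x(g) <= d. *)
Lemma lift_functional c d :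
  c e = d -> d < 0 -> (forall g, g != e -> c g < 0) ->
  (forall x, inT g0 x -> x e = 0%N -> dotp c (pt x) <= d) ->
  forall x, inT g0 x -> dotp c (pt x) <= d /\
    (dotp c (pt x) = d -> x e = 0%N \/ pt x = pt (s0 g0)).
Proof.
move=> ce d_lt0 c_lt0 valid0 x Tx.
case xe: (x e) => [|k]; first by split; [apply: valid0 | left].
set rest := \sum_(g | g != e) c g * (x g)%:R.
have xE : dotp c (pt x) = d * k%:R + d + rest.
  by rewrite /dotp (bigD1 e) //= /embed xe ce -addn1 natrD mulrDr mulr1.
have rest_term_le0 g : g != e -> c g * (x g)%:R <= 0.
  by move=> ge; rewrite mulr_le0_ge0 // ltW ?c_lt0.
have rest_le0 : rest <= 0 by apply: sumr_le0.
have dk_le0 : d * k%:R <= 0 by rewrite mulr_le0_ge0 // ltW.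
rewrite xE; split; first lra.
move=> tight; right.
have k0 : k = 0%N.
  have /eqP : d * k%:R = 0 by lra.
  by rewrite mulf_eq0 (lt_eqF d_lt0) pnatr_eq0 => /eqP.
have rest0 : \sum_(g | g != e) - (c g * (x g)%:R) = 0 by rewrite sumrN -/rest; lra.
apply: functional_extensionality => g; rewrite /embed s0E.
have [->|ge] := eqVneq g e; first by rewrite xe k0.
have nonneg h : h != e -> 0 <= - (c h * (x h)%:R) by move/rest_term_le0; rewrite oppr_ge0.
move/eqP: (@psumr_eq0P _ _ _ _ nonneg rest0 g ge).
by rewrite oppr_eq0 mulf_eq0 (lt_eqF (c_lt0 g ge)) => /eqP ->.
Qed.

Lemma s0_vertex : is_vertex (inP g0) (pt (s0 g0)).
Proof.
pose c (g : Gplus G) : R := if g == e then -1 else -2.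
have off_e x : inT g0 x -> x e = 0%N -> dotp c (pt x) < -1.
  move=> Tx xe.
  have -> : dotp c (pt x) = -2 * \sum_g (x g)%:R.
    rewrite mulr_sumr /dotp; apply: eq_bigr => g _; rewrite /c /embed.
    by case: eqP => [->|_]; rewrite ?xe ?mulr0.
  have [g xg] := inT_nonzero g0_neq0 Tx.
  have xg_ge1 : 1 <= (x g)%:R :> R by rewrite ler1n.
  have : 0 <= \sum_(h | h != g) (x h)%:R :> R by apply: sumr_ge0.
  by rewrite [in X in X < _](bigD1 g) //=; lra.
have ce : c e = -1 by rewrite /c eqxx.
have c_off g : g != e -> c g < 0 by move=> ge; rewrite /c (negPf ge) oppr_lt0 ltr0n.
have lift := lift_functional ce (ltrN10 R) c_off (fun x Tx xe => ltW (off_e x Tx xe)).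
have cd : valid_on_T c (-1) by move=> x /lift [].
have s0_tight : dotp c (pt (s0 g0)) = -1 by rewrite dotp_s0.
have [c' [d' [cd' faceE]]] : is_face (inP g0) (segment (pt (s0 g0)) (pt (s0 g0))).
  apply: (segment_face s0_inT s0_inT cd s0_tight s0_tight) => x Tx xd; left.
  have [_ /(_ xd) [xe|//]] := lift x Tx.
  by have := off_e x Tx xe; rewrite xd ltxx.
by exists c', d'; split => // x; rewrite -faceE segment_same.
Qed.

Lemma adjacent_face v :
  is_vertex (inP g0) v -> v <> pt (s0 g0) -> is_face (inP g0) (segment (pt (s0 g0)) v).
Proof.
move=> /vertex_exposed [c [d [t [exp_t <-]]]] t_ne_s0.
have [Tt cd td only_t] := exp_t.
have d_lt0 := exposes_rhs_neg exp_t g0_neq0.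
have te := exposes_off_e exp_t t_ne_s0.
pose c' g := if g == e then d else c g.
have c'E x : x e = 0%N -> dotp c' (pt x) = dotp c (pt x).
  move=> xe; apply: eq_bigr => g _; rewrite /c'.
  by case: eqP => [->|//]; rewrite /embed xe !mulr0.
have c'e : c' e = d by rewrite /c' eqxx.
have c'_off g : g != e -> c' g < 0.
  by move=> ge; rewrite /c' (negPf ge); exact: exposes_coef_neg exp_t g.
have valid_off_e x : inT g0 x -> x e = 0%N -> dotp c' (pt x) <= d.
  by move=> Tx xe; rewrite c'E // cd.
have lift := lift_functional c'e d_lt0 c'_off valid_off_e.
have cd' : valid_on_T c' d by move=> x /lift [].
have s0_tight : dotp c' (pt (s0 g0)) = d by rewrite dotp_s0.
have t_tight : dotp c' (pt t) = d by rewrite c'E.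
apply: (segment_face s0_inT Tt cd' s0_tight t_tight) => x Tx xd.
have [_ /(_ xd) [xe|]] := lift x Tx; last by left.
by right; apply: only_t; rewrite -?c'E.
Qed.

End UnitVector.

End ConvexHull.

Theorem corollary4 (R : realFieldType) (G : finZmodType) (g0 : G) :
  g0 != 0%R ->
  is_vertex (inP (R:=R) g0) (embed R (s0 g0)) /\
  (forall v : Gplus G -> R,
     is_vertex (inP g0) v -> v <> embed R (s0 g0) ->
     adjacent (inP g0) (embed R (s0 g0)) v).
Proof.
move=> g0_neq0.
pose e : Gplus G := exist _ g0 g0_neq0.
have eE : val e = g0 by [].
have s0_vtx := s0_vertex R eE.
split=> // v v_vtx v_ne_s0; split=> //; first by move/esym/v_ne_s0.
exact: (adjacent_face eE v_vtx v_ne_s0).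
Qed.
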